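(* Let $\Delta:M_n\to M_n$ be a weak-2-local derivation which is symmetric, i.e. $\Delta(a^* )^*=\Delta(a)$ for all $a\in M_n$. Let $p_1,\ldots,p_n$ be mutually orthogonal minimal projections in $M_n$ and $q=1-p_n$. If $\Delta(p_j)=0$ for every $j=1,\ldots,n$, then $q\Delta(qaq)p_n=0=p_n\Delta(qaq)q$ for every $a\in M_n$.
   Context: $M_n=M_n(\mathbb{C})$. A derivation on $M_n$ is a linear map $D$ with $D(ab)=D(a)b+aD(b)$. A (not necessarily linear) map $\Delta:M_n\to M_n$ is a weak-2-local derivation if for every $a,b\in M_n$ and every $\phi\in M_n^*$ there exists a derivation $D_{a,b,\phi}$ such that $\phi\Delta(a)=\phi D_{a,b,\phi}(a)$ and $\phi\Delta(b)=\phi D_{a,b,\phi}(b)$. *)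

From HB Require Import structures.
From mathcomp Require Import all_boot all_order all_algebra.
From mathcomp Require Import reals.
From mathcomp Require Import complex.
Set Implicit Arguments. Unset Strict Implicit. Unset Printing Implicit Defensive.
Import Order.TTheory GRing.Theory Num.Theory.
Local Open Scope ring_scope.

Section Defs.
Variable R : realType.
Local Notation C := (R[i]).
Variable k : nat.
Local Notation M := ('M[C]_k).

Definition adj (a : M) : M := (map_mx Num.conj a)^T.

Definition lin_functional (phi : M -> C) : Prop :=
  forall (c : C) (a b : M), phi (c *: a + b) = c * phi a + phi b.

Definition is_derivation (D : M -> M) : Prop :=
  (forall (c : C) (a b : M), D (c *: a + b) = c *: D a + D b) /\
  (forall a b : M, D (a * b) = D a * b + a * D b).

Definition weak_2_local_derivation (Delta : M -> M) : Prop :=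
  forall (a b : M) (phi : M -> C), lin_functional phi ->
    exists D : M -> M, is_derivation D /\
      phi (Delta a) = phi (D a) /\ phi (Delta b) = phi (D b).

Definition symmetric_map (Delta : M -> M) : Prop :=
  forall a : M, adj (Delta (adj a)) = Delta a.

Definition projection (p : M) : Prop := adj p = p /\ p * p = p.

Definition minimal_projection (p : M) : Prop :=
  projection p /\ p != 0 /\
  forall q : M, projection q -> q * p = q -> q = 0 \/ q = p.
End Defs.

From HB Require Import structures.
From mathcomp Require Import all_boot all_order all_algebra.
From mathcomp Require Import reals.
From mathcomp Require Import complex.
Import Order.TTheory GRing.Theory Num.Theory.
Set Implicit Arguments. Unset Strict Implicit. Unset Printing Implicit Defensive.
Local Open Scope ring_scope.

(* A minimal projection of M_n is rank one, v v^* / |v|^2, so the p_j come from an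
   orthogonal basis v_j.  Put e = p_n and f = 1 - e.  For a derivation D the Leibniz
   rule gives f D(f x f) e = f x f D(f) e, so for a row vector u every linear
   functional of u f D(f x f) e depends only on u f x f; weak-2-locality at a pair
   (f a f, y) transfers this to Delta.  If u v_j <> 0 for all j, some y diagonal in
   the basis v_j with f y f = y satisfies u f a f = u y, and Delta kills diagonal
   matrices: weak-2-locality at (y, p_b) with functionals of p_a (.) p_b gives
   p_a Delta(y) p_b = (c_b - c_a) p_a Delta(p_b) p_b = 0.  Hence u f Delta(f a f) e = 0
   for all such generic rows u, which span all rows.  The second identity is the
   adjoint of the first at a^*, since Delta is symmetric. *)

Lemma leibniz_corner (T : pzRingType) (D : T -> T) (e b : T) :
  (forall x y, D (x * y) = D x * y + x * D y) -> e * e = e ->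
  (1 - e) * D ((1 - e) * b * (1 - e)) * e = (1 - e) * b * (1 - e) * D (1 - e) * e.
Proof.
move=> DM ee; set f := 1 - e.
have fe : f * e = 0 by rewrite /f mulrBl ee mul1r subrr.
have ef : e * f = 0 by rewrite /f mulrBr ee mulr1 subrr.
have ff : f * f = f by rewrite {1}/f mulrBl mul1r ef subr0.
have fDfe : f * D f * e = D f * e.
  have eDfe : e * D f * e = 0.
    by rewrite -{1}ff DM mulrDr mulrDl -!mulrA fe !mulr0 add0r !mulrA ef !mul0r.
  have : (f + e) * D f * e = D f * e by rewrite /f subrK mul1r.
  by rewrite !mulrDl eDfe addr0.
rewrite !DM mulrDr mulrDl.
have -> : f * ((D f * b + f * D b) * f) * e = 0 by rewrite -!mulrA fe !mulr0.
rewrite add0r.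
have -> : f * b * f * D f * e = f * b * (f * D f * e) by rewrite !mulrA.
by rewrite fDfe !mulrA ff.
Qed.

Section Diagonal.
Variables (K : nzRingType) (A : algType K) (I : finType) (p : I -> A).
Hypothesis p_idem : forall j, p j * p j = p j.
Hypothesis p_orth : forall j l, j != l -> p j * p l = 0.

Lemma diag_mulr (c : I -> K) b : (\sum_j c j *: p j) * p b = c b *: p b.
Proof.
rewrite mulr_suml (bigD1 b) //= big1 ?addr0 => [|j jb]; first by rewrite -scalerAl p_idem.
by rewrite -scalerAl p_orth ?scaler0.
Qed.

Lemma mulr_diag (c : I -> K) b : p b * (\sum_j c j *: p j) = c b *: p b.
Proof.
rewrite mulr_sumr (bigD1 b) //= big1 ?addr0 => [|j jb]; first by rewrite -scalerAr p_idem.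
by rewrite -scalerAr p_orth 1?eq_sym ?scaler0.
Qed.
End Diagonal.

Section ConjugateTranspose.
Variable C : numClosedFieldType.

Definition mxadj m l (A : 'M[C]_(m, l)) : 'M[C]_(l, m) := (map_mx Num.conj A)^T.

Lemma mxadjM m l r (A : 'M[C]_(m, l)) (B : 'M[C]_(l, r)) :
  mxadj (A *m B) = mxadj B *m mxadj A.
Proof. by rewrite /mxadj map_mxM trmx_mul. Qed.

Lemma mxadjK m l (A : 'M[C]_(m, l)) : mxadj (mxadj A) = A.
Proof. by apply/matrixP=> i j; rewrite !mxE conjCK. Qed.

Lemma mxadjB m l (A B : 'M[C]_(m, l)) : mxadj (A - B) = mxadj A - mxadj B.
Proof. by apply/matrixP=> i j; rewrite !mxE rmorphB. Qed.

Lemma mxadjZ m l c (A : 'M[C]_(m, l)) : mxadj (c *: A) = c^* *: mxadj A.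
Proof. by apply/matrixP=> i j; rewrite !mxE rmorphM. Qed.

Lemma mxadj1 k : mxadj (1%:M : 'M[C]_k) = 1%:M.
Proof. by rewrite /mxadj map_mx1 trmx1. Qed.

Lemma mxadj0 m l : mxadj (0 : 'M[C]_(m, l)) = 0.
Proof. by rewrite -(subrr 0) mxadjB subrr. Qed.

Definition vnorm2 k (v : 'cV[C]_k) : C := (mxadj v *m v) 0 0.

Lemma mxadj_mulv k (v : 'cV[C]_k) : mxadj v *m v = (vnorm2 v)%:M.
Proof. exact: mx11_scalar. Qed.

Lemma vnorm2E k (v : 'cV[C]_k) : vnorm2 v = \sum_i `|v i 0| ^+ 2.
Proof. by rewrite /vnorm2 mxE; apply: eq_bigr => i _; rewrite !mxE normCKC. Qed.

Lemma vnorm2_ge0 k (v : 'cV[C]_k) : 0 <= vnorm2 v.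
Proof. by rewrite vnorm2E sumr_ge0 // => i _; rewrite exprn_ge0. Qed.

Lemma vnorm2_eq0 k (v : 'cV[C]_k) : (vnorm2 v == 0) = (v == 0).
Proof.
apply/eqP/eqP => [v0 | ->]; last by rewrite /vnorm2 mulmx0 mxE.
apply/matrixP => i j; rewrite ord1 mxE; apply/eqP.
rewrite -normr_eq0 -sqrf_eq0; apply/eqP; move: v0; rewrite vnorm2E.
by move/psumr_eq0P; apply=> // l _; rewrite exprn_ge0.
Qed.

Definition rank1_proj k (v : 'cV[C]_k) : 'M[C]_k := (vnorm2 v)^-1 *: (v *m mxadj v).

Section Rank1Projection.
Variables (k : nat) (v : 'cV[C]_k).
Hypothesis v_neq0 : v != 0.

Let vnorm2_neq0 : vnorm2 v != 0. Proof. by rewrite vnorm2_eq0. Qed.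

Lemma rank1_projv : rank1_proj v *m v = v.
Proof.
by rewrite -scalemxAl -mulmxA mxadj_mulv mul_mx_scalar scalerA mulVf ?scale1r.
Qed.

Lemma mulv_rank1_proj : mxadj v *m rank1_proj v = mxadj v.
Proof.
by rewrite -scalemxAr mulmxA mxadj_mulv mul_scalar_mx scalerA mulVf ?scale1r.
Qed.

Lemma rank1_proj_idem : rank1_proj v *m rank1_proj v = rank1_proj v.
Proof. by rewrite {1}/rank1_proj -scalemxAl -mulmxA mulv_rank1_proj. Qed.

End Rank1Projection.

Lemma mxadj_rank1_proj k (v : 'cV[C]_k) : mxadj (rank1_proj v) = rank1_proj v.
Proof.
by rewrite mxadjZ mxadjM mxadjK geC0_conj // invr_ge0 vnorm2_ge0.
Qed.

Lemma rank1_projM_eq0 k (v w : 'cV[C]_k) : v != 0 -> w != 0 ->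
  (rank1_proj v *m rank1_proj w == 0) = (mxadj v *m w == 0).
Proof.
move=> v0 w0; apply/eqP/eqP => [vw | vw].
  rewrite -(mulv_rank1_proj v0) -(rank1_projv w0) mulmxA.
  by rewrite -(mulmxA _ _ (rank1_proj w)) vw mulmx0 mul0mx.
rewrite /rank1_proj -scalemxAl -scalemxAr !mulmxA -(mulmxA v) vw.
by rewrite mulmx0 mul0mx !scaler0.
Qed.

Section OrthogonalBasis.
Variables (k : nat) (v : 'I_k -> 'cV[C]_k).
Hypothesis v_neq0 : forall j, v j != 0.
Hypothesis v_orth : forall j l, j != l -> mxadj (v j) *m v l = 0.

Lemma sum_rank1_proj : \sum_j rank1_proj (v j) = 1%:M.
Proof.
pose V : 'M[C]_k := \matrix_(i, j) v j i 0.
pose L : 'M[C]_k := \matrix_(j, i) ((vnorm2 (v j))^-1 * (v j i 0)^*).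
have LV : L *m V = 1%:M.
  apply/matrixP => j l; rewrite !mxE.
  have -> : \sum_i L j i * V i l = (vnorm2 (v j))^-1 * (mxadj (v j) *m v l) 0 0.
    rewrite [X in _ = _ * X]mxE mulr_sumr; apply: eq_bigr => i _.
    by rewrite !mxE mulrA.
  case: eqP => [<- | /eqP jl]; first by rewrite mulVf ?vnorm2_eq0.
  by rewrite v_orth // mxE mulr0.
apply/matrixP => i l; rewrite -(mulmx1C LV) summxE !mxE.
by apply: eq_bigr => j _; rewrite !mxE big_ord1 !mxE mulrCA.
Qed.

Lemma generic_rows_mul_eq0 m (Z : 'M[C]_(k, m)) :
  (forall u : 'rV_k, (forall j, (u *m v j) 0 0 != 0) -> u *m Z = 0) -> Z = 0.
Proof.
move=> Zgen; pose w := \sum_j mxadj (v j).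
have wv j : (w *m v j) 0 0 = vnorm2 (v j).
  by rewrite /w mulmx_suml (bigD1 j) //= big1 ?addr0 // => l lj; exact: v_orth.
have w_gen j : (w *m v j) 0 0 != 0 by rewrite wv vnorm2_eq0.
have vZ j : mxadj (v j) *m Z = 0.
  have wj_gen l : ((w + mxadj (v j)) *m v l) 0 0 != 0.
    rewrite mulmxDl mxE wv; have [<- | jl] := eqVneq j l.
      by rewrite -/(vnorm2 (v j)) -mulr2n mulrn_eq0 vnorm2_eq0 v_neq0.
    by rewrite (v_orth jl) mxE addr0 vnorm2_eq0.
  by have := Zgen _ wj_gen; rewrite mulmxDl (Zgen w w_gen) add0r.
rewrite -[Z]mul1mx -sum_rank1_proj mulmx_suml big1 // => j _.
by rewrite -scalemxAl -mulmxA vZ mulmx0 scaler0.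
Qed.

Lemma row_diagonal_agree (u : 'rV[C]_k) (x : 'M[C]_k) :
  (forall j, (u *m v j) 0 0 != 0) ->
  exists c : 'I_k -> C, u *m x = u *m \sum_j c j *: rank1_proj (v j) /\
    forall j, x *m v j = 0 -> c j = 0.
Proof.
move=> u_gen; pose c j := (u *m x *m v j) 0 0 / (u *m v j) 0 0.
exists c; split => [|j xv0]; last by rewrite /c -mulmxA xv0 mulmx0 mxE mul0r.
rewrite -[u *m x]mulmx1 -sum_rank1_proj !mulmx_sumr; apply: eq_bigr => j _.
rewrite /rank1_proj -!scalemxAr !mulmxA (mx11_scalar (u *m x *m v j)).
rewrite (mx11_scalar (u *m v j)) !mul_scalar_mx !scalerA; congr (_ *: _).
by rewrite [RHS]mulrAC /c divfK // mulrC.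
Qed.

End OrthogonalBasis.

End ConjugateTranspose.

Section ComplexMatrices.
Variables (R : realType) (k : nat).
Local Notation C := R[i].
Local Notation M := 'M[C]_k.

Lemma adjE (a : M) : adj a = mxadj a.
Proof. by []. Qed.

Lemma lin_functional_entry m l (L : 'M[C]_(m, k)) (Q : 'M[C]_(k, l)) i j :
  lin_functional (fun z : M => (L *m z *m Q) i j).
Proof.
by move=> c a b /=; rewrite mulmxDr mulmxDl -scalemxAr -scalemxAl !mxE.
Qed.

Lemma derivationZ (D : M -> M) : is_derivation D -> forall c a, D (c *: a) = c *: D a.
Proof.
move=> [DL _] c a.
have D0 : D 0 = 0.
  have := DL 1 0 0; rewrite scale1r addr0 scale1r => D0D.
  by apply: (@addrI _ (D 0)); rewrite addr0 -D0D.
by rewrite -[c *: a]addr0 DL D0 addr0.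
Qed.

Lemma minimal_projection_rank1 (P : M) :
  minimal_projection P -> exists2 v : 'cV[C]_k, v != 0 & P = rank1_proj v.
Proof.
move=> [[adjP PP] [P0 Pmin]].
have [j /eqP Pj] : exists j, col j P != 0.
  apply/existsP; apply: contraNT P0; rewrite negb_exists => /forallP colP0.
  apply/eqP/matrixP => i j; move: (colP0 j); rewrite negbK => /eqP/matrixP/(_ i 0).
  by rewrite !mxE.
pose v := col j P.
have Pv : P *m v = v by rewrite /v !colE mulmxA; congr (_ *m _).
have vP : mxadj v *m P = mxadj v by rewrite -[in LHS]adjP -mxadjM Pv.
have v0 : v != 0 by apply/eqP.
exists v => //.
have Q_proj : projection (rank1_proj v).
  by split; [exact: mxadj_rank1_proj | exact: rank1_proj_idem].
have QP : rank1_proj v * P = rank1_proj v.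
  by rewrite /rank1_proj -mulmxE -scalemxAl -mulmxA vP.
case: (Pmin _ Q_proj QP) => // Q0.
by have := rank1_projv v0; rewrite Q0 mul0mx => /esym/eqP; rewrite (negbTE v0).
Qed.

End ComplexMatrices.

Section Weak2LocalDerivation.
Variables (R : realType) (n : nat) (Delta : 'M[R[i]]_n.+1 -> 'M[R[i]]_n.+1).
Local Notation C := R[i].
Local Notation M := 'M[C]_n.+1.
Hypothesis Delta_w2l : weak_2_local_derivation Delta.

Lemma weak2local_corner_congr (e : M) (u : 'rV[C]_n.+1) (b y : M) : e * e = e ->
  u *m ((1 - e) * b * (1 - e)) = u *m ((1 - e) * y * (1 - e)) ->
  u *m ((1 - e) * Delta ((1 - e) * b * (1 - e)) * e)
    = u *m ((1 - e) * Delta ((1 - e) * y * (1 - e)) * e).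
Proof.
move=> ee; set f := 1 - e => ub_uy; apply/matrixP => i j.
have phiE z : (u *m (f * z * e)) i j = (u *m f *m z *m e) i j.
  by rewrite [u *m _]mulmxA [u *m _]mulmxA.
have [D [[_ DM] [/= Db Dy]]] := Delta_w2l (f * b * f) (f * y * f)
  (lin_functional_entry (u *m f) e i j).
have phiD x : (u *m (f * D (f * x * f) * e)) i j = (u *m (f * x * f) *m (D f * e)) i j.
  by rewrite leibniz_corner // -[X in u *m X]mulrA mulmxA.
by rewrite [LHS]phiE Db -[LHS]phiE [LHS]phiD ub_uy -[LHS]phiD [LHS]phiE -Dy -[LHS]phiE.
Qed.

Variables (I : finType) (p : I -> M).
Hypothesis p_idem : forall j, p j * p j = p j.
Hypothesis p_sum1 : \sum_j p j = 1.
Hypothesis Delta_p0 : forall j, Delta (p j) = 0.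

Lemma weak2local_diagonal_eq0 (y : M) (c : I -> C) :
  (forall j, y * p j = c j *: p j) -> (forall j, p j * y = c j *: p j) -> Delta y = 0.
Proof.
move=> yp py.
have corner a b : p a * Delta y * p b = 0.
  apply/matrixP => i j; rewrite [RHS]mxE.
  have [D [Dder [/= Dy Dpb]]] := Delta_w2l y (p b) (lin_functional_entry (p a) (p b) i j).
  have DyP : p a * D y * p b = (c b - c a) *: (p a * D (p b) * p b).
    have Dy_pb : D y * p b = c b *: D (p b) - y * D (p b).
      by rewrite -(derivationZ Dder) -yp Dder.2 addrK.
    rewrite -{1}(p_idem b) !mulrA -(mulrA _ (D y)) Dy_pb mulrBr mulrBl mulrA py.
    by rewrite -scalerAr -!scalerAl scalerBl.
  rewrite -[LHS]/((p a *m Delta y *m p b) i j) Dy -[LHS]/((p a * D y * p b) i j) DyP mxE.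
  rewrite -[X in _ * X]/((p a *m D (p b) *m p b) i j) -Dpb Delta_p0.
  by rewrite mulmx0 mul0mx mxE mulr0.
rewrite -[Delta y]mul1r -[Delta y]mulr1 -p_sum1 mulr_suml big1 // => a _.
by rewrite mulr_sumr mulr_sumr big1 // => b _; rewrite mulrA corner.
Qed.

End Weak2LocalDerivation.

Section Corner.
Variables (R : realType) (n : nat) (Delta : 'M[R[i]]_n.+1 -> 'M[R[i]]_n.+1).
Local Notation C := R[i].
Local Notation M := 'M[C]_n.+1.
Hypothesis Delta_w2l : weak_2_local_derivation Delta.
Variable v : 'I_n.+1 -> 'cV[C]_n.+1.
Hypothesis v_neq0 : forall j, v j != 0.
Hypothesis v_orth : forall j l, j != l -> mxadj (v j) *m v l = 0.
Hypothesis Delta_p0 : forall j, Delta (rank1_proj (v j)) = 0.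
Variable m : 'I_n.+1.
Local Notation p j := (rank1_proj (v j)).
Local Notation e := (p m).

Let p_idem j : p j * p j = p j. Proof. exact: rank1_proj_idem. Qed.

Let p_orth j l : j != l -> p j * p l = 0.
Proof. by move=> jl; apply/eqP; rewrite -mulmxE rank1_projM_eq0 // v_orth. Qed.

Lemma row_corner_eq0 (a : M) (u : 'rV[C]_n.+1) : (forall j, (u *m v j) 0 0 != 0) ->
  u *m ((1 - e) * Delta ((1 - e) * a * (1 - e)) * e) = 0.
Proof.
move=> u_gen; set f := 1 - e.
have fe : f * e = 0 by rewrite /f mulrBl p_idem mul1r subrr.
have [c [ua_uy c0]] := row_diagonal_agree v_neq0 v_orth (f * a * f) u_gen.
set y := \sum_j c j *: p j in ua_uy.
have Dy0 : Delta y = 0.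
  apply: (weak2local_diagonal_eq0 Delta_w2l p_idem _ Delta_p0 (c := c)).
  - exact: sum_rank1_proj.
  - exact: diag_mulr.
  - exact: mulr_diag.
have cm : c m = 0.
  apply: c0; rewrite -(rank1_projv (v_neq0 m)) mulmxA.
  by rewrite -[X in X *m _ = 0]/(f * a * f * e) -mulrA fe mulr0 mul0mx.
have ye : y * e = 0 by rewrite /y diag_mulr // cm scale0r.
have ey : e * y = 0 by rewrite /y mulr_diag // cm scale0r.
have yf : f * y * f = y.
  by rewrite /f mulrBr mulr1 -mulrA ye mulr0 subr0 mulrBl mul1r ey subr0.
rewrite (weak2local_corner_congr Delta_w2l _ (y := y)) ?p_idem ?yf // Dy0.
by rewrite mulr0 mul0r mulmx0.
Qed.

Lemma corner_eq0 (a : M) : (1 - e) * Delta ((1 - e) * a * (1 - e)) * e = 0.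
Proof. by apply: (generic_rows_mul_eq0 v_neq0 v_orth) => u; exact: row_corner_eq0. Qed.

End Corner.

Theorem lemma2p2 (R : realType) (n : nat) (Delta : 'M[R[i]]_n.+1 -> 'M[R[i]]_n.+1)
  (p : 'I_n.+1 -> 'M[R[i]]_n.+1) :
  weak_2_local_derivation Delta ->
  symmetric_map Delta ->
  (forall j, minimal_projection (p j)) ->
  (forall j l, j != l -> p j * p l = 0) ->
  (forall j, Delta (p j) = 0) ->
  forall a : 'M[R[i]]_n.+1,
    let q := 1 - p ord_max in
    q * Delta (q * a * q) * p ord_max = 0 /\ p ord_max * Delta (q * a * q) * q = 0.
Proof.
move=> Delta_w2l Delta_sym p_min p_orth Delta_p0 a q.
have [v v_neq0 pE] := fin_all_exists2 (fun j => minimal_projection_rank1 (p_min j)).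
have v_orth j l : j != l -> mxadj (v j) *m v l = 0.
  by move=> jl; apply/eqP; rewrite -rank1_projM_eq0 // -!pE; apply/eqP; exact: p_orth.
have Delta_v0 j : Delta (rank1_proj (v j)) = 0 by rewrite -pE.
have corner b : q * Delta (q * b * q) * p ord_max = 0.
  by rewrite /q pE; exact: corner_eq0.
split; first exact: corner.
have adj_pm : mxadj (p ord_max) = p ord_max by have [[]] := p_min ord_max.
have adj_q : mxadj q = q by rewrite mxadjB mxadj1 adj_pm.
rewrite -Delta_sym !adjE mxadjM mxadjM adj_q.
transitivity (mxadj (q * Delta (q * mxadj a * q) * p ord_max)).
  by rewrite !mxadjM adj_pm adj_q -mulrA [q *m _]mulmxA.
by rewrite corner mxadj0.
Qed.
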